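(* For every WHB-algebra $\mathbf A$, the congruence lattice $\mathrm{Con}_{\mathcal{WHB}}(\mathbf A)$ of $\mathbf A$ is isomorphic to the congruence lattice $\mathrm{Con}_{\mathcal{TBA}}(T(\mathbf A))$ of the tense algebra $T(\mathbf A)$.
   Context: A WHB-algebra is an algebra $(A,\wedge,\vee,\to,\leftarrow,0,1)$ such that $(A,\wedge,\vee,0,1)$ is a bounded distributive lattice and for all $a,b,c\in A$: $a\to a=1$; $a\to(b\wedge c)=(a\to b)\wedge(a\to c)$; $(a\vee b)\to c=(a\to c)\wedge(b\to c)$; $(a\to b)\wedge(b\to c)\le a\to c$; $a\leftarrow a=0$; $(a\vee b)\leftarrow c=(a\leftarrow c)\vee(b\leftarrow c)$; $a\leftarrow(b\wedge c)=(a\leftarrow b)\vee(a\leftarrow c)$; $a\leftarrow c\le(a\leftarrow b)\vee(b\leftarrow c)$; $a\wedge((a\to b)\leftarrow 0)\le b$; $a\le b\vee(1\to(a\leftarrow b))$. A tense algebra is $(\mathbf B,G,H)$ with $\mathbf B$ a Boolean algebra and unary $G,H$ such that, with $P(x)=\neg H(\neg x)$, $F(x)=\neg G(\neg x)$: $P(x)\le y\iff x\le G(y)$ and $F(x)\le y\iff x\le H(y)$. For a WHB-algebra $\mathbf A$: $X(\mathbf A)$ is its set of prime filters, $\sigma_{\mathbf A}(a)=\{P\colon a\in P\}$, $\tau_{\mathbf A}$ the topology with subbase $\{\sigma_{\mathbf A}(a)\}\cup\{X(\mathbf A)\setminus\sigma_{\mathbf A}(a)\}$; $(P,Q)\in R_{\mathbf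 A}$ iff for all $a,b$ ($a\to b\in P$, $a\in Q$ imply $b\in Q$); $(P,Q)\in S_{\mathbf A}$ iff for all $a,b$ ($a\in Q$, $b\notin Q$ imply $a\leftarrow b\in P$). $T(\mathbf A)$ is the Boolean algebra of $\tau_{\mathbf A}$-clopen subsets of $X(\mathbf A)$ with $G_{\mathbf A}(U)=\{P\colon R_{\mathbf A}(P)\subseteq U\}$ and $H_{\mathbf A}(U)=\{P\colon S_{\mathbf A}(P)\subseteq U\}$, where $\mathcal R(P)=\{Q\colon(P,Q)\in\mathcal R\}$. *)

From Stdlib Require Import List.
Import ListNotations.

Record WHBsig := {
  wcar :> Type;
  wmeet : wcar -> wcar -> wcar;
  wjoin : wcar -> wcar -> wcar;
  wimp  : wcar -> wcar -> wcar;
  wcoimp : wcar -> wcar -> wcar;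
  wzero : wcar;
  wone  : wcar
}.

Section WHBdefs.
Variable A : WHBsig.
Local Notation "a /\' b" := (wmeet A a b) (at level 40, left associativity).
Local Notation "a \/' b" := (wjoin A a b) (at level 50, left associativity).
Local Notation "a ~> b" := (wimp A a b) (at level 60, right associativity).
Local Notation "a <~ b" := (wcoimp A a b) (at level 60, right associativity).
Local Notation "0" := (wzero A).
Local Notation "1" := (wone A).

Definition wle (a b : A) : Prop := a /\' b = a.

Definition bdl_axioms : Prop :=
  (forall a b c : A, a /\' (b /\' c) = (a /\' b) /\' c) /\
  (forall a b c : A, a \/' (b \/' c) = (a \/' b) \/' c) /\
  (forall a b : A, a /\' b = b /\' a) /\
  (forall a b : A, a \/' b = b \/' a) /\
  (forall a b : A, a /\' (a \/' b) = a) /\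
  (forall a b : A, a \/' (a /\' b) = a) /\
  (forall a b c : A, a /\' (b \/' c) = (a /\' b) \/' (a /\' c)) /\
  (forall a : A, a /\' 0 = 0) /\
  (forall a : A, a \/' 1 = 1).

Definition is_WHB : Prop :=
  bdl_axioms /\
  (forall a : A, a ~> a = 1) /\
  (forall a b c : A, a ~> (b /\' c) = (a ~> b) /\' (a ~> c)) /\
  (forall a b c : A, (a \/' b) ~> c = (a ~> c) /\' (b ~> c)) /\
  (forall a b c : A, wle ((a ~> b) /\' (b ~> c)) (a ~> c)) /\
  (forall a : A, a <~ a = 0) /\
  (forall a b c : A, (a \/' b) <~ c = (a <~ c) \/' (b <~ c)) /\
  (forall a b c : A, a <~ (b /\' c) = (a <~ b) \/' (a <~ c)) /\
  (forall a b c : A, wle (a <~ c) ((a <~ b) \/' (b <~ c))) /\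
  (forall a b : A, wle (a /\' ((a ~> b) <~ 0)) b) /\
  (forall a b : A, wle a (b \/' (1 ~> (a <~ b)))).

Definition WHB_congruence (th : A -> A -> Prop) : Prop :=
  (forall a, th a a) /\
  (forall a b, th a b -> th b a) /\
  (forall a b c, th a b -> th b c -> th a c) /\
  (forall a b c d, th a b -> th c d -> th (a /\' c) (b /\' d)) /\
  (forall a b c d, th a b -> th c d -> th (a \/' c) (b \/' d)) /\
  (forall a b c d, th a b -> th c d -> th (a ~> c) (b ~> d)) /\
  (forall a b c d, th a b -> th c d -> th (a <~ c) (b <~ d)).

Definition prime_filter (P : A -> Prop) : Prop :=
  P 1 /\ ~ P 0 /\
  (forall a b, P a -> P b -> P (a /\' b)) /\
  (forall a b, P a -> wle a b -> P b) /\
  (forall a b, P (a \/' b) -> P a \/ P b).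

Definition XA : Type := { P : A -> Prop | prime_filter P }.

Definition sigmaA (a : A) : XA -> Prop := fun P => proj1_sig P a.

Definition subbasic (s : bool * A) : XA -> Prop :=
  fun P => if fst s then sigmaA (snd s) P else ~ sigmaA (snd s) P.

(* open sets of the topology tau_A generated by the subbase:
   unions of finite intersections of subbasic sets *)
Definition tau_open (U : XA -> Prop) : Prop :=
  forall P, U P -> exists l : list (bool * A),
    (forall s, In s l -> subbasic s P) /\
    (forall Q, (forall s, In s l -> subbasic s Q) -> U Q).

Definition tau_clopen (U : XA -> Prop) : Prop :=
  tau_open U /\ tau_open (fun P => ~ U P).

Definition RA (P Q : XA) : Prop :=
  forall a b, proj1_sig P (a ~> b) -> proj1_sig Q a -> proj1_sig Q b.
Definition SA (P Q : XA) : Prop :=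
  forall a b, proj1_sig Q a -> ~ proj1_sig Q b -> proj1_sig P (a <~ b).

Definition GA (U : XA -> Prop) : XA -> Prop := fun P => forall Q, RA P Q -> U Q.
Definition HA (U : XA -> Prop) : XA -> Prop := fun P => forall Q, SA P Q -> U Q.
Definition Tmeet (U V : XA -> Prop) : XA -> Prop := fun P => U P /\ V P.
Definition Tjoin (U V : XA -> Prop) : XA -> Prop := fun P => U P \/ V P.
Definition Tcompl (U : XA -> Prop) : XA -> Prop := fun P => ~ U P.

(* congruences of the tense algebra T(A) = (Clop(X(A)), cap, cup, compl,
   empty, X, G_A, H_A): equivalence relations on the set of clopens,
   compatible with all operations (constants are trivially compatible). *)
Definition TBA_congruence (th : (XA -> Prop) -> (XA -> Prop) -> Prop) : Prop :=
  (forall U V, th U V -> tau_clopen U /\ tau_clopen V) /\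
  (forall U, tau_clopen U -> th U U) /\
  (forall U V, th U V -> th V U) /\
  (forall U V W, th U V -> th V W -> th U W) /\
  (forall U V U' V', th U V -> th U' V' -> th (Tmeet U U') (Tmeet V V')) /\
  (forall U V U' V', th U V -> th U' V' -> th (Tjoin U U') (Tjoin V V')) /\
  (forall U V, th U V -> th (Tcompl U) (Tcompl V)) /\
  (forall U V, th U V -> th (GA U) (GA V)) /\
  (forall U V, th U V -> th (HA U) (HA V)).

End WHBdefs.

Definition rel_sub {T : Type} (r s : T -> T -> Prop) : Prop :=
  forall x y, r x y -> s x y.
Definition rel_eq {T : Type} (r s : T -> T -> Prop) : Prop :=
  forall x y, r x y <-> s x y.

(* Con_WHB(A) and Con_TBA(T(A)) are isomorphic as lattices: an order
   isomorphism (w.r.t. inclusion) between the two posets of congruences. *)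
Definition con_lattices_isomorphic (A : WHBsig) : Prop :=
  exists (f : (A -> A -> Prop) -> ((XA A -> Prop) -> (XA A -> Prop) -> Prop))
         (g : ((XA A -> Prop) -> (XA A -> Prop) -> Prop) -> (A -> A -> Prop)),
    (forall th, WHB_congruence A th -> TBA_congruence A (f th)) /\
    (forall ps, TBA_congruence A ps -> WHB_congruence A (g ps)) /\
    (forall th, WHB_congruence A th -> rel_eq (g (f th)) th) /\
    (forall ps, TBA_congruence A ps -> rel_eq (f (g ps)) ps) /\
    (forall th1 th2, WHB_congruence A th1 -> WHB_congruence A th2 ->
       (rel_sub th1 th2 <-> rel_sub (f th1) (f th2))).

(* A congruence θ of A is determined by the θ-saturated prime filters (prime
   filter theorem for the order of A/θ), and a congruence ψ of T(A) by the
   clopens ψ-equivalent to X(A). The isomorphism sends θ to "U and V agree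
   wherever finitely many θ-pairs are not separated" and ψ to
   (a, b ↦ σ(a) ψ σ(b)). Compatibility with → and ← comes from the prime filter
   theorem for A and for its order dual, which yields R- and S-successors, so
   that σ(a → b) = G(σ(a)ᶜ ∪ σ(b)) and σ(a ← b) = ¬H¬(σ(a) ∩ σ(b)ᶜ). The two
   maps are mutually inverse because X(A) is compact: every clopen is a finite
   intersection of sets σ(c)ᶜ ∪ σ(d), which also shows that G and H preserve
   clopens. *)

From Stdlib Require Import List Classical FunctionalExtensionality PropExtensionality.
Import ListNotations.
From mathcomp Require classical_sets boolp.

Lemma pred_ext {T : Type} (U V : T -> Prop) : (forall t, U t <-> V t) -> U = V.
Proof.
  intro H. apply functional_extensionality; intro t.
  apply propositional_extensionality, H.
Qed.

Section Zorn.
Context {T : Type}.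

Definition subpred (X Y : T -> Prop) : Prop := forall t, X t -> Y t.
Definition is_chain (F : (T -> Prop) -> Prop) : Prop :=
  forall X Y, F X -> F Y -> subpred X Y \/ subpred Y X.
Definition bigunion (F : (T -> Prop) -> Prop) : T -> Prop :=
  fun t => exists X, F X /\ X t.

Lemma zorn_above (Good : (T -> Prop) -> Prop) (S0 : T -> Prop) :
  Good S0 ->
  (forall F, (exists X, F X) -> (forall X, F X -> Good X) -> is_chain F ->
     Good (bigunion F)) ->
  exists M, Good M /\ subpred S0 M /\
    forall M', Good M' -> subpred M M' -> subpred M' M.
Proof.
  intros GS0 Gunion.
  set (E := {X : T -> Prop | Good X /\ subpred S0 X}).
  set (R := fun X Y : E => boolp.asbool (subpred (proj1_sig X) (proj1_sig Y))).
  assert (RE : forall X Y, is_true (R X Y) = subpred (proj1_sig X) (proj1_sig Y))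
    by (intros; apply boolp.asboolE).
  destruct (classical_sets.ZL_preorder (exist _ S0 (conj GS0 (fun _ h => h))) (R := R))
    as [[M [GM S0M]] Mmax].
  - intro X. rewrite RE. intros t h; exact h.
  - intros X Y Z. rewrite !RE. intros h1 h2 t h; auto.
  - intros Ch Htot. destruct (classic (exists X, Ch X)) as [[X0 ChX0] | Hempty].
    + set (F := fun Y => exists X, Ch X /\ proj1_sig X = Y).
      assert (GF : Good (bigunion F)).
      { apply Gunion.
        - exists (proj1_sig X0), X0; auto.
        - intros Y [X [_ <-]]; exact (proj1 (proj2_sig X)).
        - intros Y Y' [X [ChX <-]] [X' [ChX' <-]].
          destruct (Htot X X' ChX ChX') as [h | h]; rewrite RE in h; auto. }
      assert (S0F : subpred S0 (bigunion F)).
      { intros t h. exists (proj1_sig X0); split; [exists X0; auto |].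
        apply (proj2 (proj2_sig X0)), h. }
      exists (exist _ (bigunion F) (conj GF S0F)). intros X ChX. rewrite RE.
      intros t h. exists (proj1_sig X); split; [exists X|]; auto.
    + exists (exist _ S0 (conj GS0 (fun _ h => h))). intros X ChX.
      exfalso; eauto.
  - exists M. repeat split; auto. intros M' GM' MM'.
    assert (S0M' : subpred S0 M') by (intros t h; auto).
    specialize (Mmax (exist _ M' (conj GM' S0M'))); cbv beta in Mmax.
    rewrite !RE in Mmax.
    exact (Mmax MM').
Qed.

End Zorn.

Section PrimeFilterTheorem.
Context {T : Type}.
Variables (le : T -> T -> Prop) (meet join : T -> T -> T).
Hypotheses (le_refl : forall x, le x x)
  (le_trans : forall x y z, le x y -> le y z -> le x z)
  (meet_lel : forall x y, le (meet x y) x) (meet_ler : forall x y, le (meet x y) y)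
  (meet_glb : forall x y z, le z x -> le z y -> le z (meet x y))
  (join_gel : forall x y, le x (join x y)) (join_ger : forall x y, le y (join x y))
  (join_lub : forall x y z, le x z -> le y z -> le (join x y) z)
  (meet_join_distr : forall x y z, le (meet z (join x y)) (join (meet z x) (meet z y))).

Definition is_filter (S : T -> Prop) : Prop :=
  (forall x y, S x -> le x y -> S y) /\ (forall x y, S x -> S y -> S (meet x y)).
Definition is_ideal (S : T -> Prop) : Prop :=
  (forall x y, S y -> le x y -> S x) /\ (forall x y, S x -> S y -> S (join x y)).

Lemma filter_chain_union (Fam : (T -> Prop) -> Prop) (I : T -> Prop) :
  (forall X, Fam X -> is_filter X /\ forall x, X x -> ~ I x) -> is_chain Fam ->
  is_filter (bigunion Fam) /\ forall x, bigunion Fam x -> ~ I x.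
Proof.
  intros HF Hch. split; [split |].
  - intros x y [X [FX Xx]] xy. exists X; split; auto.
    apply (proj1 (proj1 (HF X FX)) x); auto.
  - intros x y [X [FX Xx]] [Y [FY Yy]].
    destruct (Hch X Y FX FY) as [XY | YX].
    + exists Y; split; auto. apply (proj1 (HF Y FY)); auto.
    + exists X; split; auto. apply (proj1 (HF X FX)); auto.
  - intros x [X [FX Xx]]. apply (proj2 (HF X FX)), Xx.
Qed.

(* The filter generated by [M] and [y] meets [I] unless it is [M] itself. *)
Lemma maximal_filter_escape (M I : T -> Prop) :
  (exists x, M x) -> is_filter M -> (forall x, M x -> ~ I x) ->
  (forall M', is_filter M' -> (forall x, M' x -> ~ I x) -> subpred M M' -> subpred M' M) ->
  forall y, ~ M y -> exists x i, M x /\ I i /\ le (meet x y) i.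
Proof.
  intros [x0 Mx0] [Mup Mmeet] Mdisj Mmax y My. apply NNPP; intro Hno.
  set (M' := fun z => exists x, M x /\ le (meet x y) z).
  assert (HM' : subpred M' M).
  { apply Mmax.
    - split.
      + intros a b [x [Mx xa]] ab. exists x; split; eauto.
      + intros a b [x [Mx xa]] [x' [Mx' xb]]. exists (meet x x'); split; auto.
        apply meet_glb.
        * apply le_trans with (meet x y); auto. apply meet_glb; eauto.
        * apply le_trans with (meet x' y); auto. apply meet_glb; eauto.
    - intros a [x [Mx xa]] Ia. apply Hno. exists x, a; auto.
    - intros t Mt. exists t; split; auto. }
  apply My, HM'. exists x0; split; auto.
Qed.

Lemma escape_prime (M I : T -> Prop) :
  is_filter M -> is_ideal I -> (forall x, M x -> ~ I x) ->
  (forall y, ~ M y -> exists x i, M x /\ I i /\ le (meet x y) i) ->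
  forall x y, M (join x y) -> M x \/ M y.
Proof.
  intros [Mup Mmeet] [Idown Ijoin] Mdisj Mesc x y Mxy.
  apply NNPP; intros [Mx My]%not_or_and.
  destruct (Mesc x Mx) as (m1 & i1 & Mm1 & Ii1 & le1).
  destruct (Mesc y My) as (m2 & i2 & Mm2 & Ii2 & le2).
  set (m := meet (meet m1 m2) (join x y)).
  apply (Mdisj m); [apply Mmeet; auto |].
  apply Idown with (join i1 i2); [apply Ijoin; auto |].
  apply le_trans with (join (meet m x) (meet m y)).
  - apply le_trans with (meet m (join x y)); [| apply meet_join_distr].
    apply meet_glb; unfold m; auto.
  - assert (m_m1 : le m m1) by (apply le_trans with (meet m1 m2); unfold m; auto).
    assert (m_m2 : le m m2) by (apply le_trans with (meet m1 m2); unfold m; auto).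
    apply join_lub.
    + apply le_trans with i1; [| auto]. apply le_trans with (meet m1 x); [| exact le1].
      apply meet_glb; eauto.
    + apply le_trans with i2; [| auto]. apply le_trans with (meet m2 y); [| exact le2].
      apply meet_glb; eauto.
Qed.

Theorem prime_filter_theorem (F I : T -> Prop) :
  is_filter F -> is_ideal I -> (exists x, F x) -> (forall x, F x -> ~ I x) ->
  exists M, is_filter M /\ subpred F M /\ (forall x, M x -> ~ I x) /\
    (forall x y, M (join x y) -> M x \/ M y) /\
    (forall y, ~ M y -> exists x i, M x /\ I i /\ le (meet x y) i).
Proof.
  intros hF hI [x0 Fx0] FI.
  destruct (zorn_above (fun X => is_filter X /\ forall x, X x -> ~ I x) F)
    as (M & [hM MI] & FM & Mmax).
  - split; auto.
  - intros Fam _ HFam Hch. apply filter_chain_union; auto.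
  - assert (Mesc := maximal_filter_escape M I (ex_intro _ x0 (FM x0 Fx0)) hM MI
                      (fun M' hM' M'I => Mmax M' (conj hM' M'I))).
    exists M. repeat split; try apply hM; auto.
    apply (escape_prime M I); auto.
Qed.

End PrimeFilterTheorem.

Lemma Forall_or_split {X : Type} (P R : X -> Prop) (L : list X) :
  Forall (fun x => P x \/ R x) L ->
  exists K, Forall R K /\ Forall (fun x => P x \/ In x K) L.
Proof.
  induction 1 as [| x L HPR _ [K [KR LK]]].
  - exists []. auto.
  - destruct HPR as [Px | Rx].
    + exists K. auto.
    + exists (x :: K). split; [auto |].
      constructor; [right; left; reflexivity |].
      eapply Forall_impl; [| exact LK]. intros y [Py | Ky]; [left | right; right]; auto.
Qed.

Lemma chain_Forall_bound {T : Type} (Fam : (T -> Prop) -> Prop) (L : list T) :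
  (exists X, Fam X) -> is_chain Fam -> Forall (bigunion Fam) L ->
  exists X, Fam X /\ Forall X L.
Proof.
  intros [X0 FX0] Hch. induction 1 as [| t L [Y [FY Yt]] _ [X [FX XL]]].
  - exists X0. auto.
  - destruct (Hch X Y FX FY) as [XY | YX].
    + exists Y. split; [auto |]. constructor; [auto | eapply Forall_impl; eauto].
    + exists X. auto.
Qed.

Section FiniteSatisfiability.
Context {Model Constraint : Type} (models : Model -> Constraint -> Prop).

Definition fin_sat (K : Constraint -> Prop) : Prop :=
  forall L, Forall K L -> exists m, Forall (models m) L.

Lemma fin_sat_maximal (S0 : Constraint -> Prop) : fin_sat S0 ->
  exists K, fin_sat K /\ subpred S0 K /\
    forall K', fin_sat K' -> subpred K K' -> subpred K' K.
Proof.
  intro HS0. apply zorn_above; auto.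
  intros Fam Hne HFam Hch L HL.
  destruct (chain_Forall_bound Fam L Hne Hch HL) as (X & FX & XL).
  exact (HFam X FX L XL).
Qed.

Section Maximal.
Variable K : Constraint -> Prop.
Hypotheses (K_sat : fin_sat K)
  (K_max : forall K', fin_sat K' -> subpred K K' -> subpred K' K).

Lemma maxsat_refute c : ~ K c ->
  exists L, Forall K L /\ forall m, Forall (models m) L -> ~ models m c.
Proof.
  intro Kc. apply NNPP; intro Hno. apply Kc.
  apply (K_max (fun d => d = c \/ K d)); [| intros d Kd; right; exact Kd | left; reflexivity].
  intros L' HL'. destruct (Forall_or_split _ K L' HL') as (L & LK & L'L).
  apply NNPP; intro Hunsat. apply Hno. exists L. split; [exact LK |].
  intros m Hm Hc. apply Hunsat. exists m.
  eapply Forall_impl; [| exact L'L]. intros d [-> | Ld]; [exact Hc |].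
  eapply Forall_forall; eauto.
Qed.

Lemma maxsat_entailed L c : Forall K L ->
  (forall m, Forall (models m) L -> models m c) -> K c.
Proof.
  intros LK Hent. apply NNPP; intro Kc.
  destruct (maxsat_refute c Kc) as (L' & L'K & Href).
  destruct (K_sat (L ++ L')) as [m [Hm Hm']%Forall_app]; [apply Forall_app; auto |].
  exact (Href m Hm' (Hent m Hm)).
Qed.

Lemma maxsat_either c1 c2 : (forall m, models m c1 \/ models m c2) -> K c1 \/ K c2.
Proof.
  intro Hor. apply NNPP; intros [K1 K2]%not_or_and.
  destruct (maxsat_refute c1 K1) as (L1 & L1K & Href1).
  destruct (maxsat_refute c2 K2) as (L2 & L2K & Href2).
  destruct (K_sat (L1 ++ L2)) as [m [Hm1 Hm2]%Forall_app]; [apply Forall_app; auto |].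
  destruct (Hor m); [apply (Href1 m) | apply (Href2 m)]; auto.
Qed.

End Maximal.
End FiniteSatisfiability.

Section WHBAlgebra.
Variable A : WHBsig.
Local Infix "⊓" := (wmeet A) (at level 40, left associativity).
Local Infix "⊔" := (wjoin A) (at level 50, left associativity).
Local Infix "~>" := (wimp A) (at level 60, right associativity).
Local Infix "<~" := (wcoimp A) (at level 60, right associativity).
Local Infix "≤" := (wle A) (at level 70, no associativity).
Local Notation "0" := (wzero A).
Local Notation "1" := (wone A).

Hypothesis A_bdl : bdl_axioms A.
Hypotheses (impxx : forall a, a ~> a = 1)
  (impxI : forall a b c, a ~> b ⊓ c = (a ~> b) ⊓ (a ~> c))
  (impUx : forall a b c, a ⊔ b ~> c = (a ~> c) ⊓ (b ~> c))
  (imp_trans : forall a b c, (a ~> b) ⊓ (b ~> c) ≤ (a ~> c))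
  (coimpxx : forall a, a <~ a = 0)
  (coimpUx : forall a b c, a ⊔ b <~ c = (a <~ c) ⊔ (b <~ c))
  (coimpxI : forall a b c, a <~ b ⊓ c = (a <~ b) ⊔ (a <~ c))
  (coimp_trans : forall a b c, a <~ c ≤ (a <~ b) ⊔ (b <~ c)).

Lemma meetA a b c : a ⊓ (b ⊓ c) = a ⊓ b ⊓ c. Proof. apply A_bdl. Qed.
Lemma joinA a b c : a ⊔ (b ⊔ c) = a ⊔ b ⊔ c. Proof. apply A_bdl. Qed.
Lemma meetC a b : a ⊓ b = b ⊓ a. Proof. apply A_bdl. Qed.
Lemma joinC a b : a ⊔ b = b ⊔ a. Proof. apply A_bdl. Qed.
Lemma meetKU a b : a ⊓ (a ⊔ b) = a. Proof. apply A_bdl. Qed.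
Lemma joinKI a b : a ⊔ (a ⊓ b) = a. Proof. apply A_bdl. Qed.
Lemma meetUr a b c : a ⊓ (b ⊔ c) = a ⊓ b ⊔ a ⊓ c. Proof. apply A_bdl. Qed.
Lemma meetx0 a : a ⊓ 0 = 0. Proof. apply A_bdl. Qed.
Lemma joinx1 a : a ⊔ 1 = 1. Proof. apply A_bdl. Qed.

Lemma meetxx a : a ⊓ a = a.
Proof. rewrite <- (joinKI a a) at 2. apply meetKU. Qed.
Lemma joinxx a : a ⊔ a = a.
Proof. rewrite <- (meetKU a a) at 2. apply joinKI. Qed.
Lemma meetx1 a : a ⊓ 1 = a.
Proof. rewrite <- (joinx1 a). apply meetKU. Qed.
Lemma joinIr a b c : a ⊔ b ⊓ c = (a ⊔ b) ⊓ (a ⊔ c).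
Proof.
  rewrite (meetUr (a ⊔ b)), (meetC (a ⊔ b) a), meetKU, (meetC (a ⊔ b) c), meetUr.
  rewrite joinA, (meetC c a), joinKI, (meetC c b). reflexivity.
Qed.

Lemma wle_joinE a b : a ≤ b <-> a ⊔ b = b.
Proof.
  unfold wle. split; intro H.
  - rewrite <- H, joinC, meetC. apply joinKI.
  - rewrite <- H. apply meetKU.
Qed.

Lemma wle_refl a : a ≤ a. Proof. apply meetxx. Qed.
Lemma wle_trans a b c : a ≤ b -> b ≤ c -> a ≤ c.
Proof. unfold wle. intros ab bc. rewrite <- ab, <- meetA, bc. reflexivity. Qed.
Lemma wle_eq a b : a = b -> a ≤ b.
Proof. intros ->. apply wle_refl. Qed.
Lemma wleIl a b : a ⊓ b ≤ a.
Proof. unfold wle. rewrite (meetC (a ⊓ b)), meetA, meetxx. reflexivity. Qed.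
Lemma wleIr a b : a ⊓ b ≤ b.
Proof. unfold wle. rewrite <- meetA, meetxx. reflexivity. Qed.
Lemma wlexI a b c : c ≤ a -> c ≤ b -> c ≤ a ⊓ b.
Proof. unfold wle. intros ca cb. rewrite meetA, ca, cb. reflexivity. Qed.
Lemma wleUl a b : a ≤ a ⊔ b. Proof. apply meetKU. Qed.
Lemma wleUr a b : b ≤ a ⊔ b. Proof. rewrite joinC. apply meetKU. Qed.
Lemma wleUx a b c : a ≤ c -> b ≤ c -> a ⊔ b ≤ c.
Proof. rewrite !wle_joinE. intros ac bc. rewrite <- joinA, bc. exact ac. Qed.
Lemma wle0x a : 0 ≤ a. Proof. unfold wle. rewrite meetC. apply meetx0. Qed.
Lemma wlex1 a : a ≤ 1. Proof. apply meetx1. Qed.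
Lemma wle1x_eq a : 1 ≤ a -> a = 1.
Proof. unfold wle. intros <-. rewrite meetC. symmetry. apply meetx1. Qed.
Lemma wlex0_eq a : a ≤ 0 -> a = 0.
Proof. unfold wle. intros <-. apply meetx0. Qed.

Lemma imp_monor a b c : b ≤ c -> a ~> b ≤ a ~> c.
Proof. unfold wle. intro bc. rewrite <- impxI, bc. reflexivity. Qed.
Lemma impx1 a : a ~> 1 = 1.
Proof. apply wle1x_eq. rewrite <- (impxx a) at 1. apply imp_monor, wlex1. Qed.
Lemma coimp_monol a b c : a ≤ b -> a <~ c ≤ b <~ c.
Proof. rewrite !wle_joinE. intro ab. rewrite <- coimpUx, ab. reflexivity. Qed.
Lemma coimp0x a : 0 <~ a = 0.
Proof. apply wlex0_eq. rewrite <- (coimpxx a) at 2. apply coimp_monol, wle0x. Qed.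

Lemma imp_joinl a b c : b ~> c ≤ a ⊔ b ~> a ⊔ c.
Proof.
  rewrite impUx. apply wlexI.
  - replace (a ~> a ⊔ c) with 1; [apply wlex1 |].
    symmetry. apply wle1x_eq. rewrite <- (impxx a) at 1. apply imp_monor, wleUl.
  - apply imp_monor, wleUr.
Qed.

Lemma coimp_meetl a b c : a ⊓ b <~ a ⊓ c ≤ b <~ c.
Proof.
  rewrite coimpxI. apply wleUx.
  - apply wle_trans with 0; [| apply wle0x].
    rewrite <- (coimpxx a). apply coimp_monol, wleIl.
  - apply coimp_monol, wleIr.
Qed.

Local Notation "a ∈ Q" := (proj1_sig Q a) (at level 70, no associativity).

Section PrimeFilter.
Variable Q : XA A.

Lemma pf_top : 1 ∈ Q. Proof. apply (proj2_sig Q). Qed.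
Lemma pf_bot : ~ 0 ∈ Q. Proof. apply (proj2_sig Q). Qed.
Lemma pf_up a b : a ∈ Q -> a ≤ b -> b ∈ Q. Proof. apply (proj2_sig Q). Qed.
Lemma pf_meet a b : a ⊓ b ∈ Q <-> a ∈ Q /\ b ∈ Q.
Proof.
  split.
  - intro H. split; eapply pf_up; eauto using wleIl, wleIr.
  - intros [Ha Hb]. apply (proj2_sig Q); auto.
Qed.
Lemma pf_join a b : a ⊔ b ∈ Q <-> a ∈ Q \/ b ∈ Q.
Proof.
  split.
  - apply (proj2_sig Q).
  - intros [H | H]; eapply pf_up; eauto using wleUl, wleUr.
Qed.

End PrimeFilter.

Let filter_theorem := prime_filter_theorem (wle A) (wmeet A) (wjoin A)
  wle_refl wle_trans wleIl wleIr wlexI wleUl wleUr wleUx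
  (fun x y z => wle_eq _ _ (meetUr z x y)).
Let ideal_theorem := prime_filter_theorem (fun x y => y ≤ x) (wjoin A) (wmeet A)
  wle_refl (fun x y z xy yz => wle_trans z y x yz xy) wleUl wleUr wleUx wleIl wleIr wlexI
  (fun x y z => wle_eq _ _ (eq_sym (joinIr z x y))).

Lemma R_successor_exists (P : XA A) a b : ~ (a ~> b) ∈ P ->
  exists Q, RA A P Q /\ a ∈ Q /\ ~ b ∈ Q.
Proof.
  intro Pab.
  destruct (ideal_theorem (fun x => x ≤ b) (fun z => (a ~> z) ∈ P))
    as (M & [Mdown Mjoin] & bM & MP & Mprime & Mesc).
  - split.
    + intros x y xb yx. eapply wle_trans; eauto.
    + intros x y xb yb. apply wleUx; auto.
  - split.
    + intros x y Py yx. eapply pf_up; eauto. apply imp_monor, yx.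
    + intros x y Px Py. rewrite impxI. apply pf_meet; auto.
  - exists b. apply wle_refl.
  - intros x xb Px. apply Pab. eapply pf_up; eauto. apply imp_monor, xb.
  - assert (hQ : prime_filter A (fun x => ~ M x)).
    { repeat split.
      - intro M1. apply (MP 1 M1). rewrite impx1. apply pf_top.
      - intro M0. apply M0, (Mdown b); [apply bM, wle_refl | apply wle0x].
      - intros x y Mx My Mxy. destruct (Mprime x y Mxy); auto.
      - intros x y Mx xy My. apply Mx, (Mdown y); auto.
      - intros x y Mxy. apply NNPP; intros [Mx My]%not_or_and.
        apply Mxy, Mjoin; apply NNPP; auto. }
    exists (exist _ _ hQ); cbn. repeat split.
    + intros x y Pxy Mx My.
      destruct (Mesc x Mx) as (z & i & Mz & Pi & iz).
      apply (MP (z ⊔ y)); [apply Mjoin; auto |].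
      apply (pf_up P ((a ~> z ⊔ x) ⊓ (z ⊔ x ~> z ⊔ y))); [| apply imp_trans].
      apply pf_meet. split.
      * apply (pf_up P (a ~> i)); auto. apply imp_monor, iz.
      * apply (pf_up P (x ~> y)); auto. apply imp_joinl.
    + intro Ma. apply (MP a Ma). rewrite impxx. apply pf_top.
    + intro Mb. apply Mb, bM, wle_refl.
Qed.

Lemma S_successor_exists (P : XA A) a b : (a <~ b) ∈ P ->
  exists Q, SA A P Q /\ a ∈ Q /\ ~ b ∈ Q.
Proof.
  intro Pab.
  destruct (filter_theorem (fun x => a ≤ x) (fun z => ~ (z <~ b) ∈ P))
    as (M & [Mup Mmeet] & aM & MP & Mprime & Mesc).
  - split.
    + intros x y ax xy. eapply wle_trans; eauto.
    + intros x y ax ay. apply wlexI; auto.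
  - split.
    + intros x y Py xy Px. apply Py. eapply pf_up; eauto. apply coimp_monol, xy.
    + intros x y Px Py. rewrite coimpUx, pf_join. tauto.
  - exists a. apply wle_refl.
  - intros x ax Px. apply Px. eapply pf_up; eauto. apply coimp_monol, ax.
  - assert (hQ : prime_filter A M).
    { repeat split; auto.
      - apply (Mup a); [apply aM, wle_refl | apply wlex1].
      - intro M0. apply (MP 0 M0). rewrite coimp0x. apply pf_bot. }
    exists (exist _ _ hQ); cbn. repeat split.
    + intros x y Mx My. apply NNPP; intro Pxy.
      destruct (Mesc y My) as (z & i & Mz & Pi & zy_i).
      assert (Pzx : (z ⊓ x <~ b) ∈ P) by (apply NNPP, MP, Mmeet; auto).
      eapply pf_up in Pzx; [| apply coimp_trans with (b := z ⊓ y)].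
      apply pf_join in Pzx as [Pzxy | Pzy].
      * apply Pxy, (pf_up P _ _ Pzxy), coimp_meetl.
      * apply Pi, (pf_up P _ _ Pzy), coimp_monol, zy_i.
    + apply aM, wle_refl.
    + intro Mb. apply (MP b Mb). rewrite coimpxx. apply pf_bot.
Qed.

Lemma imp_in_pf (P : XA A) a b :
  (a ~> b) ∈ P <-> forall Q, RA A P Q -> a ∈ Q -> b ∈ Q.
Proof.
  split.
  - intros Pab Q PQ. apply PQ, Pab.
  - intro H. apply NNPP; intro Pab.
    destruct (R_successor_exists P a b Pab) as (Q & PQ & Qa & Qb). eauto.
Qed.

Lemma coimp_in_pf (P : XA A) a b :
  (a <~ b) ∈ P <-> exists Q, SA A P Q /\ a ∈ Q /\ ~ b ∈ Q.
Proof.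
  split.
  - apply S_successor_exists.
  - intros (Q & PQ & Qa & Qb). apply PQ; auto.
Qed.

(** * Compactness of X(A) *)

Definition holds (Q : XA A) (p : A * A) : Prop := fst p ∈ Q -> snd p ∈ Q.

(* [(1, a)] and [(a, 0)] encode [a ∈ Q] and [a ∉ Q]. A maximal finitely
   satisfiable extension K of C contains one of them for every [a], and
   [{a | K (1, a)}] is the required prime filter. *)
Theorem pf_compactness (C : A * A -> Prop) :
  fin_sat holds C -> exists Q, forall p, C p -> holds Q p.
Proof.
  intro HC. destruct (fin_sat_maximal holds C HC) as (K & K_sat & CK & K_max).
  pose proof (maxsat_entailed holds K K_sat K_max) as entailed.
  assert (K_decides : forall a, K (1, a) \/ K (a, 0)).
  { intro a. apply (maxsat_either holds K K_sat K_max). intro Q. unfold holds; cbn.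
    destruct (classic (a ∈ Q)); [left | right]; tauto. }
  assert (hQ : prime_filter A (fun a => K (1, a))).
  { repeat split.
    - apply (entailed []); [constructor | unfold holds; auto].
    - intro K10. destruct (K_sat [(1, 0)]) as [Q [H _]%Forall_cons_iff]; [auto |].
      exact (pf_bot Q (H (pf_top Q))).
    - intros a b Ka Kb. apply (entailed [(1, a); (1, b)]); [auto |].
      intros Q [Ha [Hb _]%Forall_cons_iff]%Forall_cons_iff _.
      apply pf_meet. split; [apply Ha | apply Hb]; apply pf_top.
    - intros a b Ka ab. apply (entailed [(1, a)]); [auto |].
      intros Q [Ha _]%Forall_cons_iff _. exact (pf_up Q a b (Ha (pf_top Q)) ab).
    - intros a b Kab. destruct (K_decides a) as [Ka | Ka0]; [left; exact Ka |].
      destruct (K_decides b) as [Kb | Kb0]; [right; exact Kb |]. exfalso.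
      destruct (K_sat [(1, a ⊔ b); (a, 0); (b, 0)])
        as [Q [Hab [Ha [Hb _]%Forall_cons_iff]%Forall_cons_iff]%Forall_cons_iff]; [auto |].
      unfold holds in *; cbn in *.
      apply (pf_bot Q). apply pf_join in Hab as [H | H]; auto. apply pf_top. }
  exists (exist _ _ hQ). intros [c d] Ccd Kc; cbn in *.
  apply (entailed [(1, c); (c, d)]); [auto |].
  intros Q [Hc [Hcd _]%Forall_cons_iff]%Forall_cons_iff _. apply Hcd, Hc, pf_top.
Qed.

Lemma pf_cover (C : A * A -> Prop) :
  (forall Q, exists p, C p /\ ~ holds Q p) ->
  exists L, Forall C L /\ forall Q, ~ Forall (holds Q) L.
Proof.
  intro Hcov. apply NNPP; intro Hno.
  destruct (pf_compactness C) as [Q HQ].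
  - intros L LC. apply NNPP; intro Hunsat. apply Hno. exists L. split; [exact LC |].
    intros Q HQ. apply Hunsat. exists Q. exact HQ.
  - destruct (Hcov Q) as (p & Cp & Hp). exact (Hp (HQ p Cp)).
Qed.

Lemma subbasic_inter (l : list (bool * A)) :
  exists p, forall Q, (forall s, In s l -> subbasic A s Q) <-> ~ holds Q p.
Proof.
  induction l as [| [[] a] l [[c d] IH]].
  - exists (1, 0). intro Q. unfold holds; cbn.
    split; [intros _ H; exact (pf_bot Q (H (pf_top Q))) | intros _ s []].
  - exists (a ⊓ c, d). intro Q. unfold holds in *; cbn in *. rewrite pf_meet.
    specialize (IH Q). split.
    + intros H Hacd. apply IH; [intros s Hs; apply H; right; exact Hs |].
      intro Hc. apply Hacd. split; [exact (H _ (or_introl eq_refl)) | exact Hc].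
    + intros Hacd s [<- | Hs].
      * apply NNPP; intro Ha. apply Hacd. intros [Ha' _]. contradiction.
      * apply (proj2 IH); [| exact Hs]. intros Hcd. apply Hacd. intros [_ Hc]. auto.
  - exists (c, a ⊔ d). intro Q. unfold holds in *; cbn in *. rewrite pf_join.
    specialize (IH Q). split.
    + intros H Hcad. apply IH; [intros s Hs; apply H; right; exact Hs |].
      intro Hc. destruct (Hcad Hc) as [Ha | Hd]; [destruct (H _ (or_introl eq_refl) Ha) | exact Hd].
    + intros Hcad s [<- | Hs].
      * intro Ha. apply Hcad. intros _. left. exact Ha.
      * apply (proj2 IH); [| exact Hs]. intros Hcd. apply Hcad. intro Hc. right. auto.
Qed.

Lemma open_basis U : tau_open A U ->
  forall P, U P -> exists p, ~ holds P p /\ forall Q, ~ holds Q p -> U Q.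
Proof.
  intros HU P UP. destruct (HU P UP) as (l & Pl & lU).
  destruct (subbasic_inter l) as [p Hp]. exists p. split.
  - apply Hp, Pl.
  - intros Q HQ. apply lU, Hp, HQ.
Qed.

Definition cnf (K : list (A * A)) : XA A -> Prop := fun Q => Forall (holds Q) K.

(* By compactness, finitely many basic open sets, each inside [U] or inside its
   complement, cover X(A); those inside the complement cut out [U]. *)
Lemma clopen_cnf_repr U : tau_clopen A U -> exists K, forall Q, U Q <-> cnf K Q.
Proof.
  intros [HU HnU].
  destruct (pf_cover (fun p => (forall Q, ~ holds Q p -> U Q) \/ (forall Q, ~ holds Q p -> ~ U Q)))
    as (L & LC & Lcov).
  - intro Q. destruct (classic (U Q)) as [UQ | UQ].
    + destruct (open_basis U HU Q UQ) as (p & Qp & pU). exists p. auto.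
    + destruct (open_basis _ HnU Q UQ) as (p & Qp & pU). exists p. auto.
  - destruct (Forall_or_split _ _ L LC) as (K & KnU & LK). exists K. intro Q. split.
    + intro UQ. eapply Forall_impl; [| exact KnU]. intros p pnU. apply NNPP; intro Qp.
      exact (pnU Q Qp UQ).
    + intro HK. apply NNPP; intro UQ. apply (Lcov Q).
      eapply Forall_impl; [| exact LK]. intros p [pU | Kp].
      * apply NNPP; intro Qp. exact (UQ (pU Q Qp)).
      * eapply Forall_forall; eauto.
Qed.

Definition full : XA A -> Prop := fun _ => True.

Lemma open_meet U V : tau_open A U -> tau_open A V -> tau_open A (Tmeet A U V).
Proof.
  intros HU HV P [UP VP].
  destruct (HU P UP) as (l1 & Pl1 & l1U). destruct (HV P VP) as (l2 & Pl2 & l2V).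
  exists (l1 ++ l2). split.
  - intros s [Hs | Hs]%in_app_or; auto.
  - intros Q HQ. split; [apply l1U | apply l2V]; intros s Hs; apply HQ, in_or_app; auto.
Qed.

Lemma open_join U V : tau_open A U -> tau_open A V -> tau_open A (Tjoin A U V).
Proof.
  intros HU HV P [UP | VP].
  - destruct (HU P UP) as (l & Pl & lU). exists l. split; [exact Pl |]. left; auto.
  - destruct (HV P VP) as (l & Pl & lV). exists l. split; [exact Pl |]. right; auto.
Qed.

Lemma clopen_compl U : tau_clopen A U -> tau_clopen A (Tcompl A U).
Proof.
  intros [HU HnU]. split; [exact HnU |].
  replace (fun P => ~ Tcompl A U P) with U; [exact HU |].
  apply pred_ext. intro P. unfold Tcompl. split; [auto | apply NNPP].
Qed.

Lemma clopen_meet U V : tau_clopen A U -> tau_clopen A V -> tau_clopen A (Tmeet A U V).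
Proof.
  intros [HU HnU] [HV HnV]. split; [apply open_meet; auto |].
  replace (fun P => ~ Tmeet A U V P) with (Tjoin A (fun P => ~ U P) (fun P => ~ V P));
    [apply open_join; auto |].
  apply pred_ext. intro P. unfold Tmeet, Tjoin. split; [tauto |].
  intro H. destruct (classic (U P)); tauto.
Qed.

Lemma clopen_join U V : tau_clopen A U -> tau_clopen A V -> tau_clopen A (Tjoin A U V).
Proof.
  intros [HU HnU] [HV HnV]. split; [apply open_join; auto |].
  replace (fun P => ~ Tjoin A U V P) with (Tmeet A (fun P => ~ U P) (fun P => ~ V P));
    [apply open_meet; auto |].
  apply pred_ext. intro P. unfold Tmeet, Tjoin. tauto.
Qed.

Lemma clopen_sigma a : tau_clopen A (sigmaA A a).
Proof.
  split; intros P HP; [exists [(true, a)] | exists [(false, a)]];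
    (split; [intros s [<- | []]; exact HP | intros Q HQ; exact (HQ _ (or_introl eq_refl))]).
Qed.

Lemma clopen_full : tau_clopen A full.
Proof.
  split; intros P HP; [| contradiction HP; exact I].
  exists []. split; [intros s [] | intros; exact I].
Qed.

Lemma clopen_cnf K : tau_clopen A (cnf K).
Proof.
  induction K as [| p K IH].
  - replace (cnf []) with full; [exact clopen_full |].
    apply pred_ext. intro Q. unfold full, cnf. split; constructor.
  - replace (cnf (p :: K))
      with (Tmeet A (Tjoin A (Tcompl A (sigmaA A (fst p))) (sigmaA A (snd p))) (cnf K)).
    + apply clopen_meet; [apply clopen_join; [apply clopen_compl |] | exact IH]; apply clopen_sigma.
    + apply pred_ext. intro Q. unfold cnf, Tmeet, Tjoin, Tcompl, sigmaA, holds.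
      rewrite Forall_cons_iff. destruct (classic (fst p ∈ Q)); tauto.
Qed.

Lemma GA_cnf K : GA A (cnf K) = cnf (map (fun p => (1, fst p ~> snd p)) K).
Proof.
  apply pred_ext. intro P. unfold GA, cnf, holds. rewrite Forall_map. split.
  - intro H. apply Forall_forall. intros p Kp _. apply imp_in_pf.
    intros Q PQ. exact (proj1 (Forall_forall _ K) (H Q PQ) p Kp).
  - intros H Q PQ. apply Forall_forall. intros p Kp.
    apply (proj1 (imp_in_pf P _ _)); [| exact PQ].
    exact (proj1 (Forall_forall _ K) H p Kp (pf_top P)).
Qed.

Lemma HA_cnf K : HA A (cnf K) = cnf (map (fun p => (fst p <~ snd p, 0)) K).
Proof.
  apply pred_ext. intro P. unfold HA, cnf, holds. rewrite Forall_map. split.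
  - intro H. apply Forall_forall. intros p Kp Pp. exfalso.
    apply coimp_in_pf in Pp as (Q & PQ & Q1 & Q2).
    exact (Q2 (proj1 (Forall_forall _ K) (H Q PQ) p Kp Q1)).
  - intros H Q PQ. apply Forall_forall. intros p Kp Q1. apply NNPP; intro Q2.
    apply (pf_bot P), (proj1 (Forall_forall _ K) H p Kp), coimp_in_pf. exists Q. auto.
Qed.

Lemma clopen_GA U : tau_clopen A U -> tau_clopen A (GA A U).
Proof.
  intro hU. destruct (clopen_cnf_repr U hU) as [K HK].
  rewrite (pred_ext _ _ HK), GA_cnf. apply clopen_cnf.
Qed.

Lemma clopen_HA U : tau_clopen A U -> tau_clopen A (HA A U).
Proof.
  intro hU. destruct (clopen_cnf_repr U hU) as [K HK].
  rewrite (pred_ext _ _ HK), HA_cnf. apply clopen_cnf.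
Qed.

Lemma sigma_meet a b : sigmaA A (a ⊓ b) = Tmeet A (sigmaA A a) (sigmaA A b).
Proof. apply pred_ext. intro Q. apply pf_meet. Qed.

Lemma sigma_join a b : sigmaA A (a ⊔ b) = Tjoin A (sigmaA A a) (sigmaA A b).
Proof. apply pred_ext. intro Q. apply pf_join. Qed.

Lemma sigma_imp a b :
  sigmaA A (a ~> b) = GA A (Tjoin A (Tcompl A (sigmaA A a)) (sigmaA A b)).
Proof.
  apply pred_ext. intro P. unfold GA, Tjoin, Tcompl, sigmaA. rewrite imp_in_pf.
  split; intros H Q PQ; specialize (H Q PQ); [destruct (classic (a ∈ Q)) |]; tauto.
Qed.

Lemma sigma_coimp a b :
  sigmaA A (a <~ b) = Tcompl A (HA A (Tcompl A (Tmeet A (sigmaA A a) (Tcompl A (sigmaA A b))))).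
Proof.
  apply pred_ext. intro P. unfold HA, Tmeet, Tcompl, sigmaA. rewrite coimp_in_pf. split.
  - intros (Q & PQ & Qab) H. exact (H Q PQ Qab).
  - intro H. apply NNPP; intro Hno. apply H. intros Q PQ Qab. apply Hno. exists Q. auto.
Qed.

Definition Tiff (U V : XA A -> Prop) : XA A -> Prop := fun Q => U Q <-> V Q.

Lemma clopen_iff U V : tau_clopen A U -> tau_clopen A V -> tau_clopen A (Tiff U V).
Proof.
  intros hU hV.
  replace (Tiff U V) with (Tmeet A (Tjoin A (Tcompl A U) V) (Tjoin A (Tcompl A V) U)).
  - apply clopen_meet; apply clopen_join; auto; apply clopen_compl; auto.
  - apply pred_ext. intro Q. unfold Tiff, Tmeet, Tjoin, Tcompl.
    destruct (classic (U Q)); destruct (classic (V Q)); tauto.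
Qed.

(** * The correspondence between congruences *)

Definition agrees (l : list (A * A)) (Q : XA A) : Prop :=
  Forall (fun p => fst p ∈ Q <-> snd p ∈ Q) l.

(* The congruence of T(A) generated by the pairs (σ(a), σ(b)) with [th a b]. *)
Definition tense_cong_of (th : A -> A -> Prop) (U V : XA A -> Prop) : Prop :=
  tau_clopen A U /\ tau_clopen A V /\
  exists l, Forall (fun p => th (fst p) (snd p)) l /\ forall Q, agrees l Q -> (U Q <-> V Q).

Definition whb_cong_of (ps : (XA A -> Prop) -> (XA A -> Prop) -> Prop) (a b : A) : Prop :=
  ps (sigmaA A a) (sigmaA A b).

Definition imp_pair (p : A * A) : A * A := ((fst p ~> snd p) ⊓ (snd p ~> fst p), 1).
Definition coimp_pair (p : A * A) : A * A := ((fst p <~ snd p) ⊔ (snd p <~ fst p), 0).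

Lemma agrees_R_successor l (P Q : XA A) : agrees (map imp_pair l) P -> RA A P Q -> agrees l Q.
Proof.
  unfold agrees. rewrite Forall_map. intros Pl PQ.
  eapply Forall_impl; [| exact Pl]. intros [a b] Hab; cbn in *.
  destruct (proj1 (pf_meet P _ _) (proj2 Hab (pf_top P))) as [Pab Pba].
  split; apply PQ; assumption.
Qed.

Lemma agrees_S_successor l (P Q : XA A) : agrees (map coimp_pair l) P -> SA A P Q -> agrees l Q.
Proof.
  unfold agrees. rewrite Forall_map. intros Pl PQ.
  eapply Forall_impl; [| exact Pl]. intros [a b] Hab; cbn in *.
  split; intro H; apply NNPP; intro H';
    apply (pf_bot P), Hab, pf_join; [left | right]; apply PQ; auto.
Qed.

Section TenseCongruence.
Variable ps : (XA A -> Prop) -> (XA A -> Prop) -> Prop.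
Hypothesis ps_cong : TBA_congruence A ps.

Lemma ps_clopen U V : ps U V -> tau_clopen A U /\ tau_clopen A V.
Proof. destruct ps_cong as (H & _); eauto. Qed.
Lemma ps_refl U : tau_clopen A U -> ps U U.
Proof. destruct ps_cong as (_ & H & _); eauto. Qed.
Lemma ps_sym U V : ps U V -> ps V U.
Proof. destruct ps_cong as (_ & _ & H & _); eauto. Qed.
Lemma ps_trans U V W : ps U V -> ps V W -> ps U W.
Proof. destruct ps_cong as (_ & _ & _ & H & _); eauto. Qed.
Lemma ps_meet U V U' V' : ps U V -> ps U' V' -> ps (Tmeet A U U') (Tmeet A V V').
Proof. destruct ps_cong as (_ & _ & _ & _ & H & _); eauto. Qed.
Lemma ps_join U V U' V' : ps U V -> ps U' V' -> ps (Tjoin A U U') (Tjoin A V V').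
Proof. destruct ps_cong as (_ & _ & _ & _ & _ & H & _); eauto. Qed.
Lemma ps_compl U V : ps U V -> ps (Tcompl A U) (Tcompl A V).
Proof. destruct ps_cong as (_ & _ & _ & _ & _ & _ & H & _); eauto. Qed.
Lemma ps_GA U V : ps U V -> ps (GA A U) (GA A V).
Proof. destruct ps_cong as (_ & _ & _ & _ & _ & _ & _ & H & _); eauto. Qed.
Lemma ps_HA U V : ps U V -> ps (HA A U) (HA A V).
Proof. destruct ps_cong as (_ & _ & _ & _ & _ & _ & _ & _ & H); eauto. Qed.

Lemma ps_iff_full U V : ps U V -> ps (Tiff U V) full.
Proof.
  intro UV. destruct (ps_clopen U V UV) as [hU hV].
  assert (H := ps_join _ _ _ _ (ps_meet _ _ _ _ UV (ps_refl V hV))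
                 (ps_meet _ _ _ _ (ps_compl _ _ UV) (ps_refl _ (clopen_compl V hV)))).
  replace (Tiff U V) with (Tjoin A (Tmeet A U V) (Tmeet A (Tcompl A U) (Tcompl A V))).
  - replace full with (Tjoin A (Tmeet A V V) (Tmeet A (Tcompl A V) (Tcompl A V))); [exact H |].
    apply pred_ext. intro Q. unfold full, Tjoin, Tmeet, Tcompl.
    destruct (classic (V Q)); tauto.
  - apply pred_ext. intro Q. unfold Tiff, Tjoin, Tmeet, Tcompl.
    destruct (classic (U Q)); tauto.
Qed.

Lemma ps_full_up W W' : ps W full -> subpred W W' -> tau_clopen A W' -> ps W' full.
Proof.
  intros Wfull WW' hW'.
  assert (H := ps_join _ _ _ _ (ps_refl W' hW') Wfull).
  replace (Tjoin A W' W) with W' in H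
    by (apply pred_ext; intro Q; unfold Tjoin; split; [left | intros [h | h]]; auto).
  replace (Tjoin A W' full) with full in H
    by (apply pred_ext; intro Q; unfold Tjoin, full; split; [right | ]; auto).
  exact H.
Qed.

Lemma ps_of_iff_full U V :
  tau_clopen A U -> tau_clopen A V -> ps (Tiff U V) full -> ps U V.
Proof.
  intros hU hV UVfull.
  assert (HU := ps_meet _ _ _ _ (ps_refl U hU) UVfull).
  assert (HV := ps_meet _ _ _ _ (ps_refl V hV) UVfull).
  replace (Tmeet A U full) with U in HU by (apply pred_ext; intro Q; unfold Tmeet, full; tauto).
  replace (Tmeet A V full) with V in HV by (apply pred_ext; intro Q; unfold Tmeet, full; tauto).
  replace (Tmeet A V (Tiff U V)) with (Tmeet A U (Tiff U V)) in HV
    by (apply pred_ext; intro Q; unfold Tmeet, Tiff; tauto).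
  exact (ps_trans _ _ _ (ps_sym _ _ HU) HV).
Qed.

Lemma whb_cong_of_is_congruence : WHB_congruence A (whb_cong_of ps).
Proof.
  unfold whb_cong_of. repeat split.
  - intro a. apply ps_refl, clopen_sigma.
  - intros a b. apply ps_sym.
  - intros a b c. apply ps_trans.
  - intros a b c d ab cd. rewrite !sigma_meet. apply ps_meet; auto.
  - intros a b c d ab cd. rewrite !sigma_join. apply ps_join; auto.
  - intros a b c d ab cd. rewrite !sigma_imp. apply ps_GA, ps_join; [apply ps_compl |]; auto.
  - intros a b c d ab cd. rewrite !sigma_coimp.
    apply ps_compl, ps_HA, ps_compl, ps_meet; [| apply ps_compl]; auto.
Qed.

Lemma ps_agrees_full l :
  Forall (fun p => whb_cong_of ps (fst p) (snd p)) l -> ps (agrees l) full.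
Proof.
  induction 1 as [| p l Hp _ IH].
  - replace (agrees []) with full; [apply ps_refl, clopen_full |].
    apply pred_ext. intro Q. split; constructor.
  - replace (agrees (p :: l)) with (Tmeet A (Tiff (sigmaA A (fst p)) (sigmaA A (snd p))) (agrees l))
      by (apply pred_ext; intro Q; unfold agrees; rewrite Forall_cons_iff; reflexivity).
    replace full with (Tmeet A full full) by (apply pred_ext; intro Q; unfold Tmeet, full; tauto).
    apply ps_meet; [apply ps_iff_full, Hp | exact IH].
Qed.

Lemma whb_cong_of_clause W c d :
  ps W full -> (forall Q, W Q -> holds Q (c, d)) -> whb_cong_of ps (c ⊓ d) c.
Proof.
  intros Wfull Wcd. apply ps_of_iff_full; [apply clopen_sigma | apply clopen_sigma |].
  apply ps_full_up with W; [exact Wfull | | apply clopen_iff; apply clopen_sigma].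
  intros Q WQ. specialize (Wcd Q WQ). unfold holds in Wcd; cbn in Wcd.
  unfold Tiff, sigmaA. rewrite pf_meet. tauto.
Qed.

Lemma tense_whb_tense : rel_eq (tense_cong_of (whb_cong_of ps)) ps.
Proof.
  intros U V. split.
  - intros (hU & hV & l & Hl & HQ). apply ps_of_iff_full; auto.
    apply ps_full_up with (agrees l); [apply ps_agrees_full, Hl | exact HQ |].
    apply clopen_iff; auto.
  - intro UV. destruct (ps_clopen U V UV) as [hU hV].
    destruct (clopen_cnf_repr (Tiff U V) (clopen_iff U V hU hV)) as [K HK].
    split; [exact hU | split; [exact hV |]].
    exists (map (fun p => (fst p ⊓ snd p, fst p)) K). split.
    + apply Forall_map, Forall_forall. intros [c d] Kcd; cbn.
      apply (whb_cong_of_clause (Tiff U V)); [apply ps_iff_full, UV |].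
      intros Q UVQ. apply HK in UVQ. exact (proj1 (Forall_forall _ K) UVQ (c, d) Kcd).
    + intros Q HQ. apply HK. unfold agrees in HQ. rewrite Forall_map in HQ.
      eapply Forall_impl; [| exact HQ]. intros [c d] Hcd Hc; cbn in *.
      apply Hcd, pf_meet in Hc. tauto.
Qed.

End TenseCongruence.

Definition saturated (th : A -> A -> Prop) (Q : XA A) : Prop :=
  forall c d, th c d -> (c ∈ Q <-> d ∈ Q).

Section Congruence.
Variable th : A -> A -> Prop.
Hypothesis th_cong : WHB_congruence A th.

Lemma th_refl a : th a a.
Proof. destruct th_cong as (H & _); eauto. Qed.
Lemma th_sym a b : th a b -> th b a.
Proof. destruct th_cong as (_ & H & _); eauto. Qed.
Lemma th_trans a b c : th a b -> th b c -> th a c.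
Proof. destruct th_cong as (_ & _ & H & _); eauto. Qed.
Lemma th_meet a b c d : th a b -> th c d -> th (a ⊓ c) (b ⊓ d).
Proof. destruct th_cong as (_ & _ & _ & H & _); eauto. Qed.
Lemma th_join a b c d : th a b -> th c d -> th (a ⊔ c) (b ⊔ d).
Proof. destruct th_cong as (_ & _ & _ & _ & H & _); eauto. Qed.
Lemma th_imp a b c d : th a b -> th c d -> th (a ~> c) (b ~> d).
Proof. destruct th_cong as (_ & _ & _ & _ & _ & H & _); eauto. Qed.
Lemma th_coimp a b c d : th a b -> th c d -> th (a <~ c) (b <~ d).
Proof. destruct th_cong as (_ & _ & _ & _ & _ & _ & H); eauto. Qed.

(* The order of the quotient lattice A / th, pulled back to A. *)
Definition th_le x y : Prop := th (x ⊓ y) x.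

Lemma wle_th_le x y : x ≤ y -> th_le x y.
Proof. unfold th_le, wle. intros ->. apply th_refl. Qed.
Lemma th_le_trans x y z : th_le x y -> th_le y z -> th_le x z.
Proof.
  unfold th_le. intros xy yz.
  apply th_trans with (x ⊓ y ⊓ z); [apply th_meet; [apply th_sym, xy | apply th_refl] |].
  rewrite <- meetA. apply th_trans with (x ⊓ y); auto. apply th_meet; [apply th_refl | exact yz].
Qed.
Lemma th_le_glb x y z : th_le z x -> th_le z y -> th_le z (x ⊓ y).
Proof.
  unfold th_le. intros zx zy. rewrite meetA.
  apply th_trans with (z ⊓ y); auto. apply th_meet; [exact zx | apply th_refl].
Qed.
Lemma th_le_lub x y z : th_le x z -> th_le y z -> th_le (x ⊔ y) z.
Proof.
  unfold th_le. intros xz yz. rewrite meetC, meetUr, (meetC z x), (meetC z y).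
  apply th_join; auto.
Qed.

Let th_filter_theorem := prime_filter_theorem th_le (wmeet A) (wjoin A)
  (fun x => wle_th_le x x (wle_refl x)) th_le_trans
  (fun x y => wle_th_le _ _ (wleIl x y)) (fun x y => wle_th_le _ _ (wleIr x y)) th_le_glb
  (fun x y => wle_th_le _ _ (wleUl x y)) (fun x y => wle_th_le _ _ (wleUr x y)) th_le_lub
  (fun x y z => wle_th_le _ _ (wle_eq _ _ (meetUr z x y))).

Lemma saturated_separation_le a b : ~ th a (a ⊓ b) ->
  exists Q, saturated th Q /\ a ∈ Q /\ ~ b ∈ Q.
Proof.
  intro Hab.
  destruct (th_filter_theorem (th_le a) (fun x => th_le x (a ⊓ b)))
    as (M & [Mup Mmeet] & aM & MI & Mprime & _).
  - split; [intros; eapply th_le_trans; eauto | intros; apply th_le_glb; auto].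
  - split; [intros; eapply th_le_trans; eauto | intros; apply th_le_lub; auto].
  - exists a. apply wle_th_le, wle_refl.
  - intros x ax xab. apply Hab, th_sym.
    assert (H := th_le_trans _ _ _ ax xab). unfold th_le in H.
    rewrite meetA, meetxx in H. exact H.
  - assert (Ma : M a) by (apply aM, wle_th_le, wle_refl).
    assert (M_sat : forall c d, th c d -> M c -> M d).
    { intros c d cd Mc. apply (Mup c); auto. unfold th_le.
      rewrite <- (meetxx c) at 2. apply th_meet; [apply th_refl | apply th_sym, cd]. }
    assert (hQ : prime_filter A M).
    { repeat split; auto.
      - apply (Mup a); auto. apply wle_th_le, wlex1.
      - intro M0. apply (MI 0 M0), wle_th_le, wle0x.
      - intros x y Mx xy. apply (Mup x); auto. apply wle_th_le, xy. }
    exists (exist _ _ hQ); cbn. split; [| split; [exact Ma |]].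
    + intros c d cd. split; apply M_sat; auto. apply th_sym, cd.
    + intro Mb. apply (MI (a ⊓ b)); [apply Mmeet; auto | apply wle_th_le, wle_refl].
Qed.

Lemma saturated_separation a b : ~ th a b ->
  exists Q, saturated th Q /\ ~ (a ∈ Q <-> b ∈ Q).
Proof.
  intro Hab. destruct (classic (th a (a ⊓ b))) as [H | H].
  - assert (H' : ~ th b (b ⊓ a)).
    { intro H'. apply Hab. apply th_trans with (a ⊓ b); auto. rewrite meetC. apply th_sym, H'. }
    destruct (saturated_separation_le b a H') as (Q & HQ & Qb & Qa). exists Q. tauto.
  - destruct (saturated_separation_le a b H) as (Q & HQ & Qa & Qb). exists Q. tauto.
Qed.

Lemma th_imp_pair p : th (fst p) (snd p) -> th (fst (imp_pair p)) (snd (imp_pair p)).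
Proof.
  destruct p as [a b]; cbn. intro ab.
  replace 1 with ((b ~> b) ⊓ (b ~> b)) by (rewrite meetxx; apply impxx).
  apply th_meet; apply th_imp; auto using th_refl, th_sym.
Qed.

Lemma th_coimp_pair p : th (fst p) (snd p) -> th (fst (coimp_pair p)) (snd (coimp_pair p)).
Proof.
  destruct p as [a b]; cbn. intro ab.
  replace 0 with ((b <~ b) ⊔ (b <~ b)) by (rewrite joinxx; apply coimpxx).
  apply th_join; apply th_coimp; auto using th_refl, th_sym.
Qed.

Lemma tense_cong_of_trans U V W :
  tense_cong_of th U V -> tense_cong_of th V W -> tense_cong_of th U W.
Proof.
  intros (hU & _ & l1 & Hl1 & UV) (_ & hW & l2 & Hl2 & VW).
  split; [exact hU | split; [exact hW |]]. exists (l1 ++ l2).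
  split; [apply Forall_app; auto |].
  intros Q [Q1 Q2]%Forall_app. rewrite (UV Q Q1). exact (VW Q Q2).
Qed.

Lemma tense_cong_of_binop (op : (XA A -> Prop) -> (XA A -> Prop) -> XA A -> Prop)
    U V U' V' :
  (forall W W', tau_clopen A W -> tau_clopen A W' -> tau_clopen A (op W W')) ->
  (forall W X W' X' Q, (W Q <-> X Q) -> (W' Q <-> X' Q) -> (op W W' Q <-> op X X' Q)) ->
  tense_cong_of th U V -> tense_cong_of th U' V' -> tense_cong_of th (op U U') (op V V').
Proof.
  intros op_clopen op_ext (hU & hV & l1 & Hl1 & UV) (hU' & hV' & l2 & Hl2 & UV').
  split; [auto | split; [auto |]]. exists (l1 ++ l2).
  split; [apply Forall_app; auto |].
  intros Q [Q1 Q2]%Forall_app. apply op_ext; auto.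
Qed.

Lemma tense_cong_of_compl U V :
  tense_cong_of th U V -> tense_cong_of th (Tcompl A U) (Tcompl A V).
Proof.
  intros (hU & hV & l & Hl & UV).
  split; [apply clopen_compl, hU | split; [apply clopen_compl, hV |]].
  exists l. split; [exact Hl |]. intros Q Ql. unfold Tcompl. rewrite (UV Q Ql). reflexivity.
Qed.

Lemma tense_cong_of_GA U V : tense_cong_of th U V -> tense_cong_of th (GA A U) (GA A V).
Proof.
  intros (hU & hV & l & Hl & UV).
  split; [apply clopen_GA, hU | split; [apply clopen_GA, hV |]].
  exists (map imp_pair l). split.
  - apply Forall_map. eapply Forall_impl; [exact th_imp_pair | exact Hl].
  - intros P Pl. unfold GA.
    split; intros H Q PQ; apply (UV Q (agrees_R_successor l P Q Pl PQ)); auto.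
Qed.

Lemma tense_cong_of_HA U V : tense_cong_of th U V -> tense_cong_of th (HA A U) (HA A V).
Proof.
  intros (hU & hV & l & Hl & UV).
  split; [apply clopen_HA, hU | split; [apply clopen_HA, hV |]].
  exists (map coimp_pair l). split.
  - apply Forall_map. eapply Forall_impl; [exact th_coimp_pair | exact Hl].
  - intros P Pl. unfold HA.
    split; intros H Q PQ; apply (UV Q (agrees_S_successor l P Q Pl PQ)); auto.
Qed.

Lemma tense_cong_of_is_congruence : TBA_congruence A (tense_cong_of th).
Proof.
  split; [intros U V (hU & hV & _); auto |].
  split; [intros U hU; split; [| split; [| exists []; split; [constructor | reflexivity]]]; auto |].
  split.
  { intros U V (hU & hV & l & Hl & UV). split; [exact hV | split; [exact hU |]].
    exists l. split; [exact Hl |]. intros Q Ql. symmetry. exact (UV Q Ql). }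
  split; [exact tense_cong_of_trans |].
  split; [intros; apply tense_cong_of_binop; auto using clopen_meet; unfold Tmeet; tauto |].
  split; [intros; apply tense_cong_of_binop; auto using clopen_join; unfold Tjoin; tauto |].
  split; [exact tense_cong_of_compl |].
  split; [exact tense_cong_of_GA | exact tense_cong_of_HA].
Qed.

Lemma whb_tense_whb : rel_eq (whb_cong_of (tense_cong_of th)) th.
Proof.
  intros a b. split.
  - intros (_ & _ & l & Hl & ab). apply NNPP; intro nab.
    destruct (saturated_separation a b nab) as (Q & Qsat & Qab). apply Qab, ab.
    eapply Forall_impl; [| exact Hl]. intros p. apply Qsat.
  - intro ab. split; [apply clopen_sigma | split; [apply clopen_sigma |]].
    exists [(a, b)]. split; [constructor; auto |].
    intros Q Qab. apply Forall_cons_iff in Qab. apply Qab.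
Qed.

End Congruence.

Lemma tense_cong_of_mono th1 th2 : WHB_congruence A th1 -> WHB_congruence A th2 ->
  (rel_sub th1 th2 <-> rel_sub (tense_cong_of th1) (tense_cong_of th2)).
Proof.
  intros th1_cong th2_cong. split.
  - intros th12 U V (hU & hV & l & Hl & UV). split; [exact hU | split; [exact hV |]].
    exists l. split; [| exact UV]. eapply Forall_impl; [| exact Hl]. intro p. apply th12.
  - intros Hsub a b ab. apply (whb_tense_whb th2 th2_cong), Hsub, (whb_tense_whb th1 th1_cong), ab.
Qed.

Lemma con_lattices_iso : con_lattices_isomorphic A.
Proof.
  exists tense_cong_of, whb_cong_of.
  split; [exact tense_cong_of_is_congruence |].
  split; [exact whb_cong_of_is_congruence |].
  split; [exact whb_tense_whb |].
  split; [exact tense_whb_tense | exact tense_cong_of_mono].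
Qed.

End WHBAlgebra.

Theorem theorem6p6 (A : WHBsig) (HA : is_WHB A) : con_lattices_isomorphic A.
Proof.
  destruct HA as (A_bdl & impxx & impxI & impUx & imp_trans & coimpxx & coimpUx & coimpxI &
                  coimp_trans & _ & _).
  exact (con_lattices_iso A A_bdl impxx impxI impUx imp_trans coimpxx coimpUx coimpxI coimp_trans).
Qed.
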